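(* Let $(X,E,\ell)$ be a uniformly connected and deterministic edge-labelled directed graph with label alphabet $\Sigma$, and let $F\subset\Sigma^+$ be a finite, non-empty set which is relatively dense in $(X,E,\ell)$. Then $$\sup_{x,y\in X}\mathsf h(L^F_{x,y})<\mathsf h(X).$$
   Context: $\Sigma$ is a finite alphabet, $\Sigma^*$ the set of finite words (including the empty word $\epsilon$), $\Sigma^+=\Sigma^*\setminus\{\epsilon\}$, $|w|$ the length of $w$. A factor of $a_1\cdots a_n$ is a word $a_i a_{i+1}\cdots a_j$, $1\le i\le j\le n$. For a language $L\subset\Sigma^*$, its entropy is $\mathsf h(L)=\limsup_{n\to\infty}\frac1n\log|\{w\in L:|w|=n\}|$, and for finite $F\subset\Sigma^+$, $L^F=\{w\in L:\text{no }v\in F\text{ is a factor of }w\}$. $(X,E,\ell)$ is a (possibly infinite) directed graph with vertex set $X$ whose edges $e=(x,a,y)$ have initial vertex $x$, terminal vertex $y$ and label $\ell(e)=a\in\Sigma$ (multiple edges and loops allowed, but two edges with the same endpoints have distinct labels). A path is a sequence of edges $e_1\cdots e_n$ with terminal vertex of $e_i$ equal to the initial vertex of $e_{i+1}$; its label is $\ell(e_1)\cdots\ell(e_n)$; the empty path at $x$ has label $\epsilon$. $L_{x,y}$ is the set of labels of all paths from $x$ to $y$, and $\mathsf h(X)=\sup_{x,y\in X}\mathsf h(L_{x,y})$. The graph is deterministic if for every vertex $x$ and $a\in\Sigma$ there is at most one edge with initial vertex $x$ and label $a$. It is strongly connected if there is a path between any ordered pair of vertices, and uniformly connected if it is strongly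 connected and there is $K$ such that for every edge from $x$ to $y$ there is a path from $y$ to $x$ of length at most $K$. The forward distance $d^+(x,y)$ is the minimal length of a path from $x$ to $y$. $F$ is relatively dense if there is $D$ such that for every $x\in X$ there are $y\in X$ and $w\in F$ with $d^+(x,y)\le D$ and a path starting at $y$ with label $w$. *)

From HB Require Import structures.
From mathcomp Require Import all_boot all_order all_algebra.
From mathcomp Require Import all_classical all_reals all_analysis.
Set Implicit Arguments. Unset Strict Implicit. Unset Printing Implicit Defensive.
Import Order.TTheory GRing.Theory Num.Theory.
Local Open Scope ring_scope.
Local Open Scope ereal_scope.

(* Since two edges with the same
   endpoints have distinct labels, an edge is determined by its triple. *)
Definition lgraph (X : Type) (Sigma : finType) := X -> Sigma -> X -> Prop.

Inductive path_lab (X : Type) (Sigma : finType) (E : lgraph X Sigma)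
  : X -> X -> seq Sigma -> Prop :=
| path_nil x : path_lab E x x [::]
| path_cons x a z y w : E x a z -> path_lab E z y w -> path_lab E x y (a :: w).

Definition Lxy (X : Type) (Sigma : finType) (E : lgraph X Sigma) (x y : X)
  : seq Sigma -> Prop := fun w => path_lab E x y w.

Definition avoid (Sigma : finType) (L : seq Sigma -> Prop) (F : seq (seq Sigma))
  : seq Sigma -> Prop := fun w => L w /\ (forall v, v \in F -> ~~ infix v w).

Definition nwords (Sigma : finType) (L : seq Sigma -> Prop) (n : nat) : nat :=
  #|[set w : n.-tuple Sigma | `[< L (tval w) >] ]|.

Definition entropy (R : realType) (Sigma : finType) (L : seq Sigma -> Prop)
  : \bar R :=
  limn_esup (fun n => if nwords L n == 0%N then -oo
                      else ((ln (nwords L n)%:R / n%:R)%R)%:E).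

Definition graph_entropy (R : realType) (X : Type) (Sigma : finType)
  (E : lgraph X Sigma) : \bar R :=
  ereal_sup [set entropy R (Lxy E x y) | x in [set: X] & y in [set: X]].

Definition deterministic (X : Type) (Sigma : finType) (E : lgraph X Sigma) :=
  forall x a y1 y2, E x a y1 -> E x a y2 -> y1 = y2.

Definition strongly_connected (X : Type) (Sigma : finType) (E : lgraph X Sigma) :=
  forall x y, exists w, path_lab E x y w.

Definition uniformly_connected (X : Type) (Sigma : finType) (E : lgraph X Sigma) :=
  strongly_connected E /\
  exists K : nat, forall x a y, E x a y ->
    exists w, path_lab E y x w /\ (size w <= K)%N.

Definition fdist_le (X : Type) (Sigma : finType) (E : lgraph X Sigma)
  (x y : X) (D : nat) := exists w, path_lab E x y w /\ (size w <= D)%N.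

Definition relatively_dense (X : Type) (Sigma : finType) (E : lgraph X Sigma)
  (F : seq (seq Sigma)) :=
  exists D : nat, forall x, exists y w,
    fdist_le E x y D /\ w \in F /\ exists z, path_lab E y z w.

From HB Require Import structures.
From mathcomp Require Import all_boot all_order all_algebra.
From mathcomp Require Import all_classical all_reals all_analysis.
From mathcomp Require Import ring lra zify.

Set Implicit Arguments. Unset Strict Implicit. Unset Printing Implicit Defensive.
Import Order.TTheory GRing.Theory Num.Theory.

(* Uniform connectivity and relative density give at every vertex v a cycle
   of length at most some M containing a word of F.  Cut an F-free word u of
   length n from x to y into n/L blocks of length L and splice, inside every
   block, the cycle at the vertex reached at one of the L possible positions.
   The result is still a path label from x to y, of length n + k with
   k <= (n/L) M.  As u is F-free, the shortest prefix of the result containing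
   a factor in F ends at most M letters after the first splice point, and
   recording these offsets block by block makes the construction injective:
     |L^F_{x,y} ∩ Σ^n| L^(n/L) <= ((n/L) M + 1) |L_{x,y} ∩ Σ^(n+k)| (M+1)^(n/L).
   For ln L large compared with ln (M+1) + (ln |Σ| + 1) M, this yields
   h(L_{x,y}) >= h(L^F_{x,y}) + 1/(2L) uniformly in x and y, while h(X) is
   finite and nonnegative. *)

Section DeterministicWalks.
Variables (X : Type) (Sigma : finType) (E : lgraph X Sigma).

Lemma path_lab_cat x y z s t :
  path_lab E x y s -> path_lab E y z t -> path_lab E x z (s ++ t).
Proof. by elim=> // x0 a z0 y0 w e _ IH /IH; apply: path_cons e. Qed.

Definition step (x : X) (a : Sigma) : option X :=
  match pselect (exists y, E x a y) with
  | left h => Some (sval (cid h)) | right _ => None end.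

Fixpoint walk (x : X) (w : seq Sigma) : option X :=
  if w is a :: w' then (if step x a is Some z then walk z w' else None)
  else Some x.

Lemma walk_cat x s t :
  walk x (s ++ t) = if walk x s is Some z then walk z t else None.
Proof.
elim: s x => [//|a s IH] x /=.
by case: (step x a) => // z; rewrite IH.
Qed.

Lemma walk_cat_Some x s t y : walk x (s ++ t) = Some y ->
  exists z, walk x s = Some z /\ walk z t = Some y.
Proof. by rewrite walk_cat; case: (walk x s) => // z h; exists z. Qed.

(* [x] is a junk value for words not readable from [x]. *)
Definition walk_end (x : X) (w : seq Sigma) : X := odflt x (walk x w).

Hypothesis Hdet : deterministic E.

Lemma stepP x a y : E x a y <-> step x a = Some y.
Proof.
rewrite /step; case: pselect => [h|h]; split => [e|].
- by congr Some; apply: Hdet (svalP (cid h)) e.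
- by case=> <-; exact: (svalP (cid h)).
- by exfalso; apply: h; exists y.
- by [].
Qed.

Lemma path_labP x y w : path_lab E x y w <-> walk x w = Some y.
Proof.
split; first by elim=> // x0 a z0 y0 w0 /stepP /= -> _.
elim: w x => [|a w IH] x /=; first by case=> ->; exact: path_nil.
case h: (step x a) => [z|//] /IH; apply: path_cons; exact/stepP.
Qed.

End DeterministicWalks.

Lemma path_lab_return (X : Type) (Sigma : finType) (E : lgraph X Sigma) (K : nat) :
  (forall x a y, E x a y -> exists w, path_lab E y x w /\ (size w <= K)%N) ->
  forall x y w, path_lab E x y w ->
  exists w', path_lab E y x w' /\ (size w' <= K * size w)%N.
Proof.
move=> HK x y w; elim=> [x0|x0 a z0 y0 w0 e _ [w1 [p1 s1]]].
  by exists [::]; split => //; exact: path_nil.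
have [w2 [p2 s2]] := HK _ _ _ e.
exists (w1 ++ w2); split; first exact: path_lab_cat p1 p2.
by rewrite size_cat /= mulnS addnC leq_add.
Qed.

Section FirstHit.
Variables (Sigma : finType) (F : seq (seq Sigma)).

Definition hasF (s : seq Sigma) : bool := has (fun f => infix f s) F.

Lemma hasF_infix s t : infix s t -> hasF s -> hasF t.
Proof.
by move=> st /hasP[f fF fs]; apply/hasP; exists f => //; apply: infix_trans fs st.
Qed.

Lemma avoid_hasF (L : seq Sigma -> Prop) w : avoid L F w -> L w /\ ~~ hasF w.
Proof. by case=> h1 h2; split => //; apply/hasPn => v /h2. Qed.

Lemma hasF_take a u : ~~ hasF u -> ~~ hasF (take a u).
Proof. by apply: contra; apply: hasF_infix; exact: infix_take. Qed.

Lemma hasF_drop a u : ~~ hasF u -> ~~ hasF (drop a u).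
Proof. by apply: contra; apply: hasF_infix; exact: infix_drop. Qed.

Definition first_hit (v : seq Sigma) : nat :=
  find (fun e => hasF (take e v)) (iota 0 (size v).+1).

Lemma first_hit_bounds p q v : ~~ hasF (take p v) -> hasF (take q v) ->
  (q <= size v)%N -> (p < first_hit v <= q)%N.
Proof.
move=> np hq qs.
have qlt : (q < size (iota 0 (size v).+1))%N by rewrite size_iota ltnS.
have hitq : (first_hit v <= q)%N.
  rewrite leqNgt; apply/negP => /(before_find 0%N).
  by rewrite nth_iota ?ltnS // add0n hq.
rewrite hitq andbT ltnNge; apply/negP => hitp.
have hh : has (fun e => hasF (take e v)) (iota 0 (size v).+1).
  by rewrite has_find; apply: leq_ltn_trans qlt.
have := nth_find 0%N hh; rewrite -/(first_hit v) nth_iota ?add0n; last first.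
  by rewrite ltnS (leq_trans hitq qs).
apply/negP; apply: contra np; apply: hasF_infix.
by rewrite -(take_takel v hitp) infix_take.
Qed.

End FirstHit.

Section CycleInsertion.
Variables (X : Type) (Sigma : finType) (E : lgraph X Sigma) (F : seq (seq Sigma)).
Variables (cyc : X -> seq Sigma) (M L : nat).
Hypothesis cyc_size : forall v, (size (cyc v) <= M)%N.
Hypothesis cyc_pos : forall v, (0 < size (cyc v))%N.
Hypothesis cyc_F : forall v, hasF F (cyc v).
Hypothesis cyc_loop : forall v, walk E v (cyc v) = Some v.

Fixpoint insert_cycles (x : X) (u : seq Sigma) (fs : seq nat) : seq Sigma :=
  if fs is f :: fs' then
    take f u ++ cyc (walk_end E x (take f u)) ++ drop f (take L u)
      ++ insert_cycles (walk_end E x (take L u)) (drop L u) fs'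
  else u.

(* Where the first factor in [F] is completed, relative to the insertion point;
   together with the result of [insert_cycles] it determines the input. *)
Fixpoint hit_offsets (x : X) (u : seq Sigma) (fs : seq nat) : seq nat :=
  if fs is f :: fs' then
    minn (first_hit F (insert_cycles x u fs) - f) M
      :: hit_offsets (walk_end E x (take L u)) (drop L u) fs'
  else [::].

Lemma size_hit_offsets x u fs : size (hit_offsets x u fs) = size fs.
Proof. by elim: fs x u => //= f fs IH x u; rewrite IH. Qed.

Lemma hit_offsets_le x u fs : all (fun c => c <= M)%N (hit_offsets x u fs).
Proof. by elim: fs x u => //= f fs IH x u; rewrite IH geq_minr. Qed.

Lemma first_hit_insert_cycles x u f fs : (f < L)%N -> (L <= size u)%N ->
  ~~ hasF F u -> (f < first_hit F (insert_cycles x u (f :: fs)) <= f + M)%N.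
Proof.
move=> fL Lu nu; have fu : (f <= size u)%N by apply: leq_trans (ltnW fL) Lu.
have sp : size (take f u) = f by rewrite size_takel.
set v := insert_cycles x u (f :: fs); set d := cyc (walk_end E x (take f u)).
have vf : take f v = take f u by rewrite /v /= take_size_cat.
have vfd : take (f + size d) v = take f u ++ d.
  by rewrite /v /= -/d catA take_size_cat // size_cat sp.
have fdv : (f + size d <= size v)%N.
  by rewrite /v /= -/d catA size_cat size_cat sp leq_addr.
have nvf : ~~ hasF F (take f v) by rewrite vf hasF_take.
have hvfd : hasF F (take (f + size d) v).
  by rewrite vfd; apply: hasF_infix (cyc_F _); exact: suffix_infix.
case/andP: (first_hit_bounds nvf hvfd fdv) => -> /leq_trans; apply.
by rewrite leq_add2l cyc_size.
Qed.

Lemma walk_insert_cycles fs x u y : all (fun f => f < L)%N fs ->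
  (L * size fs <= size u)%N -> walk E x u = Some y ->
  walk E x (insert_cycles x u fs) = Some y.
Proof.
elim: fs x u => [//|f fs IH] x u /= /andP[fL fsL] su xu.
have Lu : (L <= size u)%N by apply: leq_trans su; rewrite mulnS leq_addr.
have [w [xw wy]] : exists w, walk E x (take L u) = Some w /\ walk E w (drop L u) = Some y.
  by apply: walk_cat_Some; rewrite cat_take_drop.
have [v [xv vw]] : exists v, walk E x (take f u) = Some v /\
    walk E v (drop f (take L u)) = Some w.
  by apply: walk_cat_Some; rewrite -{1}(take_takel u (ltnW fL)) cat_take_drop.
rewrite walk_cat xv /walk_end xv walk_cat cyc_loop walk_cat vw xw /=.
by apply: IH => //; rewrite size_drop leq_subRL // -mulnS.
Qed.

Lemma size_insert_cycles fs x u : all (fun f => f < L)%N fs ->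
  (L * size fs <= size u)%N ->
  (size u + size fs <= size (insert_cycles x u fs) <= size u + size fs * M)%N.
Proof.
elim: fs x u => [|f fs IH] x u /=; first by rewrite !addn0 leqnn.
move=> /andP[fL fsL] su.
have Lu : (L <= size u)%N by apply: leq_trans su; rewrite mulnS leq_addr.
have su' : (L * size fs <= size (drop L u))%N by rewrite size_drop leq_subRL // -mulnS.
have := IH (walk_end E x (take L u)) (drop L u) fsL su'.
have := cyc_size (walk_end E x (take f u)); have := cyc_pos (walk_end E x (take f u)).
rewrite !size_cat size_drop !size_takel ?(leq_trans (ltnW fL) Lu) // size_drop.
move: (size (cyc _)) (size (insert_cycles _ _ _)) => a b.
rewrite size_takel // mulSn; nia.
Qed.

Lemma insert_cycles_inj fs fs' x u u' : size fs = size fs' ->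
  all (fun f => f < L)%N fs -> all (fun f => f < L)%N fs' ->
  (L * size fs <= size u)%N -> (L * size fs' <= size u')%N ->
  ~~ hasF F u -> ~~ hasF F u' ->
  insert_cycles x u fs = insert_cycles x u' fs' ->
  hit_offsets x u fs = hit_offsets x u' fs' -> u = u' /\ fs = fs'.
Proof.
elim: fs fs' x u u' => [|f fs IH] [|f' fs'] x u u' //= [sz].
move=> /andP[fL fsL] /andP[fL' fsL'] su su' nu nu' eP [ec ecs].
have Lu : (L <= size u)%N by apply: leq_trans su; rewrite mulnS leq_addr.
have Lu' : (L <= size u')%N by apply: leq_trans su'; rewrite mulnS leq_addr.
have h := first_hit_insert_cycles x fs fL Lu nu.
have h' := first_hit_insert_cycles x fs' fL' Lu' nu'.
have ff : f = f' by move: ec h h'; rewrite /= eP; lia.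
subst f'.
have fu : (f <= size u)%N by apply: leq_trans (ltnW fL) Lu.
have fu' : (f <= size u')%N by apply: leq_trans (ltnW fL) Lu'.
have ef : take f u = take f u'.
  by move: (congr1 (take f) eP); rewrite !take_size_cat // size_takel.
move: eP; rewrite ef => /eqP; rewrite eqseq_cat // => /andP[_ /eqP].
move/eqP; rewrite eqseq_cat // => /andP[_ /eqP].
move/eqP; rewrite eqseq_cat ?size_drop ?size_takel // => /andP[/eqP es /eqP er].
have eL : take L u = take L u'.
  by rewrite -(cat_take_drop f (take L u)) -(cat_take_drop f (take L u'))
     !take_takel ?(ltnW fL) // ef es.
move: er ecs; rewrite eL => er ecs.
have [ed ->] : drop L u = drop L u' /\ fs = fs'.
  apply: IH er ecs => //; try exact: hasF_drop.
    by rewrite size_drop leq_subRL // -mulnS.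
  by rewrite size_drop leq_subRL // -mulnS.
by rewrite -(cat_take_drop L u) -(cat_take_drop L u') eL ed.
Qed.

End CycleInsertion.

Lemma card_le_mul_fiber (T : finType) (N : nat) (A : {set T}) (p : T -> 'I_N) :
  (0 < N)%N -> exists k : 'I_N, (#|A| <= N * #|[set z in A | p z == k]|)%N.
Proof.
move=> N_gt0.
have [k fibk] := bigop.eq_bigmax (fun k : 'I_N => #|[set z in A | p z == k]|)
  (ltac:(by rewrite card_ord)).
exists k; rewrite -fibk -sum1_card (partition_big p predT) //=.
rewrite -[X in (_ <= X * _)%N]card_ord -sum_nat_const leq_sum // => i _.
apply: leq_trans (bigop.leq_bigmax i); rewrite -sum1_card.
by apply: eq_leq; apply: eq_bigl => z; rewrite !inE.
Qed.

Section CountingInsertions.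
Variables (X : Type) (Sigma : finType) (E : lgraph X Sigma) (F : seq (seq Sigma)).
Variables (cyc : X -> seq Sigma) (M L : nat).
Hypothesis Hdet : deterministic E.
Hypothesis cyc_size : forall v, (size (cyc v) <= M)%N.
Hypothesis cyc_pos : forall v, (0 < size (cyc v))%N.
Hypothesis cyc_F : forall v, hasF F (cyc v).
Hypothesis cyc_loop : forall v, walk E v (cyc v) = Some v.
Variables (x y : X) (n : nat).

Let j := n %/ L.
Let Dom := finset.setX [set u : n.-tuple Sigma | `[< avoid (Lxy E x y) F u >]]
                [set: j.-tuple 'I_L].
Let ins (z : n.-tuple Sigma * j.-tuple 'I_L) :=
  insert_cycles E cyc L x z.1 (map val z.2).
Let offs (z : n.-tuple Sigma * j.-tuple 'I_L) :=
  hit_offsets E F cyc M L x z.1 (map val z.2).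

Let positions_lt (t : j.-tuple 'I_L) : all (fun f => f < L)%N (map val t).
Proof. by apply/allP => f /mapP[i _ ->]; exact: ltn_ord. Qed.

Let size_positions (t : j.-tuple 'I_L) : size (map val t) = j.
Proof. by rewrite size_map size_tuple. Qed.

Let positions_fit (u : n.-tuple Sigma) (t : j.-tuple 'I_L) :
  (L * size (map val t) <= size u)%N.
Proof. by rewrite size_positions size_tuple mulnC leq_divM. Qed.

Lemma card_insertions : #|Dom| = (nwords (avoid (Lxy E x y) F) n * L ^ j)%N.
Proof. by rewrite cardsX cardsT card_tuple card_ord. Qed.

Lemma insertion_in_Lxy z : z \in Dom ->
  path_lab E x y (ins z) /\ (n <= size (ins z) <= n + j * M)%N.
Proof.
case: z => u t; rewrite !inE andbT => /asboolP /avoid_hasF [xuy _]; split.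
  by apply/(path_labP Hdet)/(walk_insert_cycles cyc_loop) => //; apply/path_labP.
have /andP[lb ub] := size_insert_cycles E cyc_size cyc_pos x (positions_lt t)
  (positions_fit u t).
rewrite size_positions size_tuple in lb ub.
by rewrite ub andbT (leq_trans (leq_addr _ _) lb).
Qed.

Lemma insertion_inj : {in Dom &, forall z z',
  ins z = ins z' -> offs z = offs z' -> z = z'}.
Proof.
move=> [u t] [u' t']; rewrite !inE !andbT.
move=> /asboolP/avoid_hasF[_ nu] /asboolP/avoid_hasF[_ nu'] e eo.
have sz : size (map val t) = size (map val t') by rewrite !size_positions.
by case: (insert_cycles_inj cyc_size cyc_F sz (positions_lt t) (positions_lt t')
  (positions_fit u t) (positions_fit u' t') nu nu' e eo)
  => /val_inj -> /(inj_map val_inj)/val_inj ->.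
Qed.

Lemma card_le_same_length k (D : {set n.-tuple Sigma * j.-tuple 'I_L}) :
  D \subset Dom -> {in D, forall z, size (ins z) = k} ->
  (#|D| <= nwords (Lxy E x y) k * M.+1 ^ j)%N.
Proof.
move=> /fintype.subsetP DDom Dk.
pose g z : option (k.-tuple Sigma) * j.-tuple 'I_M.+1 :=
  (insub (ins z), [tuple (inord (nth 0%N (offs z) i) : 'I_M.+1) | i < j]).
pose B := finset.setX [set o : option (k.-tuple Sigma) |
                if o is Some w then `[< Lxy E x y w >] else false]
               [set: j.-tuple 'I_M.+1].
have cardB : #|B| = (nwords (Lxy E x y) k * M.+1 ^ j)%N.
  rewrite cardsX cardsT card_tuple card_ord; congr (_ * _)%N.
  rewrite /nwords -[RHS](card_imset _ (@Some_inj _)); apply: eq_card => -[w|].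
    by rewrite !inE mem_imset ?inE //; exact: Some_inj.
  by rewrite !inE; apply/esym/negbTE/imsetP => -[].
have insubE z (zD : z \in D) :
  insub (ins z) = Some (Tuple (introT eqP (Dk z zD))).
  by rewrite (insubT (fun s => size s == k) (introT eqP (Dk z zD))).
have gDB : g @: D \subset B.
  apply/fintype.subsetP => _ /imsetP[z zD ->]; rewrite !inE /= andbT (insubE z zD).
  by apply/asboolP; case: (insertion_in_Lxy (DDom z zD)).
have g_inj : {in D &, injective g}.
  move=> z z' zD z'D gzz'; apply: insertion_inj; rewrite ?DDom //.
    by move: (congr1 fst gzz'); rewrite /= (insubE z zD) (insubE z' z'D) => -[].
  have e2 := congr1 snd gzz'.
  apply: (@eq_from_nth _ 0%N); first by rewrite !size_hit_offsets !size_positions.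
  move=> i; rewrite size_hit_offsets size_positions => ij.
  have := congr1 (fun s => val (tnth s (Ordinal ij))) e2.
  rewrite /= !tnth_mktuple /= !inordK // ltnS;
    apply/(allP (hit_offsets_le E F cyc M L x _ _))/mem_nth;
    by rewrite size_hit_offsets size_positions.
by rewrite -cardB -(card_in_imset g_inj) subset_leq_card.
Qed.

Lemma nwords_avoid_le : exists2 k, (k <= j * M)%N &
  (nwords (avoid (Lxy E x y) F) n * L ^ j
     <= (j * M).+1 * nwords (Lxy E x y) (n + k) * M.+1 ^ j)%N.
Proof.
pose p z : 'I_(j * M).+1 := inord (size (ins z) - n).
have [k Dk] := card_le_mul_fiber Dom p (ltn0Sn _).
exists k; first by rewrite -ltnS.
rewrite -card_insertions -mulnA (leq_trans Dk) // leq_mul2l.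
apply/orP; right; apply: card_le_same_length => [|z].
  by apply/fintype.subsetP => z; rewrite inE => /andP[].
rewrite inE => /andP[zD /eqP <-]; have [_ /andP[nz zn]] := insertion_in_Lxy zD.
by rewrite inordK ?subnKC // ltnS leq_subLR.
Qed.

End CountingInsertions.

Section LogEstimates.
Local Open Scope ring_scope.
Variable R : realType.

Lemma ln_le_add_div (x T : R) : 0 < x -> 0 < T -> ln x <= ln T + x / T.
Proof.
move=> x0 T0; have -> : x = T * (x / T) by field; rewrite gt_eqF.
rewrite lnM ?posrE ?divr_gt0 // lerD2l.
have -> : T * (x / T) / T = x / T by field; rewrite gt_eqF.
exact/ltW/ln_sublinear/divr_gt0.
Qed.

Lemma ln_count_le (a b N Q L j : nat) :
  (0 < a)%N -> (0 < L)%N -> (0 < N)%N -> (0 < Q)%N ->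
  (a * L ^ j <= N * b * Q ^ j)%N ->
  (0 < b)%N /\ ln (a%:R : R) + j%:R * ln L%:R
                <= ln N%:R + ln b%:R + j%:R * ln Q%:R.
Proof.
move=> a0 L0 N0 Q0 ab.
have b0 : (0 < b)%N.
  rewrite lt0n; apply: contraTneq ab => ->.
  by rewrite muln0 mul0n -ltnNge muln_gt0 a0 expn_gt0 L0.
split=> //.
have : ln (a%:R * L%:R ^+ j : R) <= ln (N%:R * b%:R * Q%:R ^+ j).
  rewrite ler_ln ?posrE ?mulr_gt0 ?exprn_gt0 ?ltr0n //.
  by rewrite -!natrX -!natrM ler_nat.
by rewrite !lnM ?posrE ?mulr_gt0 ?exprn_gt0 ?ltr0n // !lnXn ?ltr0n // !mulr_natl.
Qed.

Lemma two_add_ln_le (L M n N : nat) : (0 < L)%N -> (0 < N)%N ->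
  (N <= n * (M + 2))%N ->
  2 * L%:R * (2 + ln (2 * L%:R * (M%:R + 2))) <= n%:R :> R ->
  2 + ln N%:R <= n%:R / L%:R :> R.
Proof.
move=> L0 N0 Nn hn; set T : R := 2 * L%:R * (M%:R + 2).
have T0 : 0 < T by rewrite !mulr_gt0 ?ltr0n // addr_gt0 ?ltr0n.
have L0R : 0 < L%:R :> R by rewrite ltr0n.
have lnN : ln N%:R <= ln T + N%:R / T by apply: ln_le_add_div; rewrite ?ltr0n.
have NT : N%:R / T <= n%:R / (2 * L%:R).
  rewrite ler_pdivrMr // /T.
  have -> : n%:R / (2 * L%:R) * (2 * L%:R * (M%:R + 2)) = n%:R * (M%:R + 2) :> R.
    by field; rewrite gt_eqF.
  by move: Nn; rewrite -(ler_nat R) natrM natrD.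
have lnT : 2 + ln T <= n%:R / (2 * L%:R).
  by rewrite ler_pdivlMr ?mulr_gt0 // mulrC.
suff : n%:R / (2 * L%:R) + n%:R / (2 * L%:R) = n%:R / L%:R :> R by lra.
by field; rewrite gt_eqF.
Qed.

Lemma rate_gain (H r : R) (M L j n k a b : nat) :
  0 <= r -> r <= H -> (0 < L)%N -> (0 < n)%N ->
  (j <= n)%N -> (n < j.+1 * L)%N -> (k <= j * M)%N -> (0 < a)%N ->
  (a * L ^ j <= (j * M).+1 * b * M.+1 ^ j)%N ->
  r * n%:R <= ln (a%:R : R) ->
  2 + ln (M.+1%:R : R) + (H + 1) * M%:R <= ln (L%:R : R) ->
  2 * L%:R * (2 + ln (2 * L%:R * (M%:R + 2) : R)) <= n%:R :> R ->
  (0 < b)%N /\ (r + L%:R^-1) * (n + k)%:R <= ln (b%:R : R).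
Proof.
move=> r0 rH L0 n0 jn nL kj a0 ab ra hL hn.
have [b0 lnab] := ln_count_le a0 L0 (ltn0Sn _) (ltn0Sn _) ab; split => //.
have N_le : ((j * M).+1 <= n * (M + 2))%N.
  have : (j * M <= n * M)%N by rewrite leq_mul2r jn orbT.
  lia.
have lnN := two_add_ln_le L0 (ltn0Sn _) N_le hn.
set d : R := L%:R^-1.
have d0 : 0 < d by rewrite invr_gt0 ltr0n.
have nd : n%:R / L%:R = n%:R * d :> R by [].
have nd_le : n%:R * d <= j%:R + 1 :> R.
  by rewrite -nd ler_pdivrMr ?ltr0n // natr1 -natrM ler_nat ltnW.
have jM : (r + d) * k%:R <= (H + 1) * (j%:R * M%:R).
  have d1 : d <= 1 by rewrite invf_le1 ?ler1n ?ltr0n.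
  by rewrite -natrM; apply: ler_pM; rewrite ?ler0n ?ler_nat //; lra.
have jl : j%:R * (2 + ln (M.+1%:R : R) + (H + 1) * M%:R) <= j%:R * ln (L%:R : R).
  by rewrite ler_wpM2l ?ler0n.
by move: lnN; rewrite nd natrD => lnN; lra.
Qed.

End LogEstimates.

Section Limsup.
Local Open Scope classical_set_scope.
Local Open Scope ereal_scope.
Variable R : realType.
Implicit Types (u : nat -> \bar R) (r : \bar R).

Lemma limn_esup_gt_frequently u r :
  r < limn_esup u -> forall N, exists2 n, (N <= n)%N & r < u n.
Proof.
move=> ru N; apply: contrapT => /forall2NP un_le.
suff : limn_esup u <= r by rewrite leNgt ru.
apply: le_trans (ereal_inf_lbound _) _; first by exists [set n | (N <= n)%N] => //; exists N.
apply: ge_ereal_sup => _ [n Nn <-]; rewrite leNgt; apply/negP.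
by case: (un_le n) => // /(_ Nn).
Qed.

Lemma limn_esup_ge_frequently u r :
  (forall N, exists2 n, (N <= n)%N & r <= u n) -> r <= limn_esup u.
Proof.
move=> ru; apply: le_ereal_inf_tmp => _ [V [N _ NV] <-].
have [n Nn rn] := ru N.
by apply: le_ereal_sup_tmp; exists (u n) => //; exists n => //; exact: NV.
Qed.

End Limsup.

Section Entropy.
Local Open Scope ring_scope.
Variables (R : realType) (Sigma : finType).
Implicit Type L : seq Sigma -> Prop.

Definition frequently_rate_ge L (r : R) : Prop :=
  forall N, exists2 n, (N <= n)%N &
    nwords L n != 0%N /\ r <= ln (nwords L n)%:R / n%:R.

Lemma entropy_ge_frequently L r : frequently_rate_ge L r -> (r%:E <= entropy R L)%E.
Proof.
move=> Lr; apply: limn_esup_ge_frequently => N; have [n Nn [L0 rn]] := Lr N.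
by exists n => //; rewrite (negbTE L0) lee_fin.
Qed.

Lemma frequently_lt_entropy L r : (r%:E < entropy R L)%E ->
  frequently_rate_ge L (Num.max r 0).
Proof.
move=> /limn_esup_gt_frequently Lr N; have [n Nn] := Lr N.
case: eqP => [_|/eqP L0]; first by rewrite ltNge leNye.
rewrite lte_fin => rn; exists n => //; split => //.
by rewrite ge_max (ltW rn) divr_ge0 // ln_ge0 // ler1n lt0n.
Qed.

Lemma entropy_le_ln_card L : (entropy R L <= (ln (#|Sigma|.+1%:R : R))%:E)%E.
Proof.
have H0 : 0 <= ln (#|Sigma|.+1%:R : R) by rewrite ln_ge0 // ler1n.
rewrite leNgt; apply/negP => /limn_esup_gt_frequently /(_ 0%N) [n _].
apply/negP; rewrite -leNgt; case: eqP => [_|/eqP L0]; first exact: leNye.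
have [->|n0] := eqVneq n 0%N; first by rewrite invr0 mulr0 lee_fin.
rewrite lee_fin ler_pdivrMr ?ltr0n ?lt0n // mulr_natr -lnXn ?ltr0n //.
rewrite ler_ln ?posrE ?exprn_gt0 ?ltr0n ?lt0n // -natrX ler_nat.
apply: (@leq_trans (#|Sigma| ^ n)); first by rewrite /nwords -card_tuple max_card.
by rewrite leq_exp2r ?lt0n.
Qed.

End Entropy.

Lemma hitting_cycles_bounded (X : Type) (Sigma : finType) (E : lgraph X Sigma)
    (F : seq (seq Sigma)) :
  deterministic E -> uniformly_connected E ->
  (forall w, w \in F -> w != [::]) -> relatively_dense E F ->
  exists M, forall v, exists c,
    [/\ walk E v c = Some v, (0 < size c)%N, (size c <= M)%N & hasF F c].
Proof.
move=> Hdet [_ [K HK]] F_ne [D HD].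
set m := \max_(w <- F) size w; exists ((D + m) * K.+1)%N => v.
have [y [w [[p [vy py]] [wF [z yz]]]]] := HD v.
have [q [zv qz]] := path_lab_return HK (path_lab_cat vy yz).
have w0 : (0 < size w)%N by rewrite lt0n size_eq0 F_ne.
have wm : (size w <= m)%N by apply: bigop.leq_bigmax_seq.
exists (p ++ w ++ q); split.
- by apply/(path_labP Hdet); rewrite catA; apply: path_lab_cat (path_lab_cat vy yz) zv.
- by rewrite !size_cat addnCA ltn_addr.
- rewrite size_cat in qz; rewrite !size_cat addnA mulnS leq_add ?leq_add //.
  by apply: leq_trans qz _; rewrite mulnC leq_mul2r leq_add ?orbT.
- by apply/hasP; exists w => //; exact: infix_infix.
Qed.

Lemma entropy_loop_ge0 (R : realType) (X : Type) (Sigma : finType)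
    (E : lgraph X Sigma) v c : deterministic E ->
  walk E v c = Some v -> (0 < size c)%N -> (0 <= entropy R (Lxy E v v))%E.
Proof.
move=> Hdet vc c0; apply: (@entropy_ge_frequently R Sigma _ 0) => N.
pose w := flatten (nseq N c).
have size_w : size w == (N * size c)%N.
  by rewrite /w; elim: (N) => //= N' IH; rewrite size_cat (eqP IH) mulSn.
have vw : walk E v w = Some v by rewrite /w; elim: (N) => //= N' IH; rewrite walk_cat vc.
have nw : nwords (Lxy E v v) (N * size c) != 0%N.
  rewrite -lt0n card_gt0; apply/set0Pn; exists (Tuple size_w).
  by rewrite inE; apply/asboolP/(path_labP Hdet).
exists (N * size c)%N; first by rewrite leq_pmulr.
by split=> //; rewrite divr_ge0 // ln_ge0 // ler1n lt0n.
Qed.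

Section EntropyGap.
Local Open Scope ring_scope.
Variables (R : realType) (X : Type) (Sigma : finType) (E : lgraph X Sigma).
Variables (F : seq (seq Sigma)) (cyc : X -> seq Sigma) (M : nat).
Hypothesis Hdet : deterministic E.
Hypothesis cycP : forall v, [/\ walk E v (cyc v) = Some v, (0 < size (cyc v))%N,
  (size (cyc v) <= M)%N & hasF F (cyc v)].

Let cyc_loop v : walk E v (cyc v) = Some v. Proof. by case: (cycP v). Qed.
Let cyc_pos v : (0 < size (cyc v))%N. Proof. by case: (cycP v). Qed.
Let cyc_size v : (size (cyc v) <= M)%N. Proof. by case: (cycP v). Qed.
Let cyc_F v : hasF F (cyc v). Proof. by case: (cycP v). Qed.

Let H : R := ln #|Sigma|.+1%:R.

Lemma rate_gap : exists2 L : nat, (0 < L)%N & forall x y (r : R), 0 <= r -> r <= H ->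
  frequently_rate_ge (avoid (Lxy E x y) F) r ->
  frequently_rate_ge (Lxy E x y) (r + L%:R^-1).
Proof.
pose L := (Num.truncn (expR (2 + ln (M.+1%:R : R) + (H + 1) * M%:R))).+1.
have lnL : 2 + ln (M.+1%:R : R) + (H + 1) * M%:R <= ln (L%:R : R).
  rewrite -[leLHS]expRK ler_ln ?posrE ?expR_gt0 ?ltr0n //.
  exact/ltW/truncnS_gt.
exists L => // x y r r0 rH avoid_r N.
pose n0 := (Num.truncn (2 * L%:R * (2 + ln (2 * L%:R * (M%:R + 2) : R)))).+1.
have [n Nn [a0 rn]] := avoid_r (maxn N n0).
have n0n : (n0 <= n)%N by apply: leq_trans Nn; rewrite leq_maxr.
have [k kj count] := nwords_avoid_le L Hdet cyc_size cyc_pos cyc_F cyc_loop x y n.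
have n_pos : (0 < n)%N by apply: leq_trans n0n.
have a_pos : (0 < nwords (avoid (Lxy E x y) F) n)%N by rewrite lt0n.
have ra : r * n%:R <= ln (nwords (avoid (Lxy E x y) F) n)%:R.
  by move: rn; rewrite ler_pdivlMr ?ltr0n.
have large_n : 2 * L%:R * (2 + ln (2 * L%:R * (M%:R + 2) : R)) <= n%:R.
  by apply/ltW/(lt_le_trans (truncnS_gt _)); rewrite ler_nat.
have [b0 rb] := rate_gain r0 rH (ltn0Sn _) n_pos (leq_div n L)
  (ltn_ceil n (ltn0Sn _)) kj a_pos count ra lnL large_n.
exists (n + k)%N; first exact: leq_trans (leq_trans (leq_maxl N n0) Nn) (leq_addr k n).
by split; [rewrite -lt0n | rewrite ler_pdivlMr ?ltr0n ?addn_gt0 ?n_pos].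
Qed.

Lemma entropy_avoid_gap : exists2 d : R, 0 < d & forall x y,
  (entropy R (avoid (Lxy E x y) F) + d%:E <= entropy R (Lxy E x y))%E.
Proof.
have [L L0 gap] := rate_gap; set d : R := L%:R^-1.
have d0 : 0 < d by rewrite invr_gt0 ltr0n.
have H0 : 0 <= H by rewrite ln_ge0 // ler1n.
exists (d / 2); first by rewrite divr_gt0.
move=> x y; have := entropy_le_ln_card R (avoid (Lxy E x y) F).
case er: entropy => [r||] Hr; [|by rewrite leye_eq in Hr|by rewrite leNye].
rewrite lee_fin -/H in Hr; set t := Num.max (r - d / 2) 0.
have t0 : 0 <= t by rewrite le_max lexx orbT.
have tH : t <= H by rewrite ge_max H0 andbT; lra.
have rt : r - d / 2 <= t by rewrite le_max lexx.
have /frequently_lt_entropy/(gap x y _ t0 tH)/entropy_ge_frequently :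
  ((r - d / 2)%:E < entropy R (avoid (Lxy E x y) F))%E by rewrite er lte_fin; lra.
by apply: le_trans; rewrite -/d -EFinD lee_fin; lra.
Qed.

End EntropyGap.

Unset Implicit Arguments.
Local Open Scope ereal_scope.

Theorem mainTheorem13 (R : realType) (X : Type) (Sigma : finType)
  (E : lgraph X Sigma) (F : seq (seq Sigma))
  (X_nonempty : inhabited X)
  (Hdet : deterministic E) (Hunif : uniformly_connected E)
  (HF_plus : forall w, w \in F -> w != [::])
  (HF_nonempty : F != [::])
  (Hdense : relatively_dense E F) :
  ereal_sup [set entropy R (avoid (Lxy E x y) F) | x in [set: X] & y in [set: X]]
    < graph_entropy R E.
Proof.
case: X_nonempty => x0.
have [M /choice[cyc cycP]] := hitting_cycles_bounded Hdet Hunif HF_plus Hdense.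
have [d d_gt0 gap] := entropy_avoid_gap R Hdet cycP.
have le_graph_entropy x y : entropy R (Lxy E x y) <= graph_entropy R E.
  by apply: ereal_sup_ubound; exists x => //; exists y.
have [loop0 pos0 _ _] := cycP x0.
have G_ge0 := le_trans (entropy_loop_ge0 R Hdet loop0 pos0) (le_graph_entropy x0 x0).
have G_le : graph_entropy R E <= (ln (#|Sigma|.+1%:R : R))%:E.
  by apply: ge_ereal_sup => _ [x _ [y _ <-]]; exact: entropy_le_ln_card.
case G: graph_entropy G_ge0 G_le => [g| |] // _ _.
apply: (@le_lt_trans _ _ (g - d)%:E); last by rewrite lte_fin; lra.
apply: ge_ereal_sup => _ [x _ [y _ <-]].
by rewrite EFinB leeBrDr // -G (le_trans (gap x y)).
Qed.
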